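(* Let $d,l\in\mathbb{N}$, let $\gamma\colon[0,1]\to(0,1)^d$ be the length parameterisation of a line segment, let $\mathcal{P}$ be a dense subset of $\operatorname{Lip}_1([0,1],\mathbb{R})$, $t_0\in(0,1)$, let $f=(f_1,\ldots,f_l)\in\operatorname{Lip}_1([0,1]^d,\mathbb{R}^l)$ with $\operatorname{Lip}(f)<1$, $\varepsilon\in(0,1)$ and $j\in\{1,\ldots,l\}$. Then there exist $p\in\mathcal{P}$, $\eta>0$ and $g=(g_1,\ldots,g_l)\in\operatorname{Lip}_1([0,1]^d,\mathbb{R}^l)$ such that: (i) $\|g(x)-f(x)\|\leq\varepsilon$ for all $x\in[0,1]^d$; (ii) $g_j(\gamma(t))=p(t)$ for all $t\in(t_0-\eta,t_0+\eta)\cap[0,1]$; (iii) if $l=1$, then $g_1\circ\gamma=p$ on $[0,1]$.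
   Context: $\operatorname{Lip}_1([0,1]^d,\mathbb{R}^l)$ is the space of mappings $[0,1]^d\to\mathbb{R}^l$ with Lipschitz constant at most $1$, with the supremum metric. A length parameterisation of a line segment is a map $\gamma(t)=a+tv$ with $\|v\|=1$. *)

From mathcomp Require Import all_boot all_order all_algebra.
From mathcomp Require Import reals.
Set Implicit Arguments. Unset Strict Implicit. Unset Printing Implicit Defensive.
Import Order.TTheory GRing.Theory Num.Theory.
Local Open Scope ring_scope.

Definition enorm (R : realType) (n : nat) (x : 'I_n -> R) : R :=
  Num.sqrt (\sum_(i < n) x i ^+ 2).

Definition vsub (R : realType) (n : nat) (x y : 'I_n -> R) : 'I_n -> R :=
  fun i => x i - y i.

Definition in_cube (R : realType) (d : nat) (x : 'I_d -> R) : Prop :=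
  forall i, 0 <= x i <= 1.
Definition in_open_cube (R : realType) (d : nat) (x : 'I_d -> R) : Prop :=
  forall i, 0 < x i < 1.

Definition lipschitz_cube (R : realType) (d l : nat)
    (L : R) (f : ('I_d -> R) -> ('I_l -> R)) : Prop :=
  forall x y, in_cube x -> in_cube y ->
    enorm (vsub (f x) (f y)) <= L * enorm (vsub x y).

Definition Lip1_cube (R : realType) (d l : nat) (f : ('I_d -> R) -> ('I_l -> R)) :=
  lipschitz_cube 1 f.

Definition Lip_lt1_cube (R : realType) (d l : nat) (f : ('I_d -> R) -> ('I_l -> R)) :=
  exists L : R, L < 1 /\ lipschitz_cube L f.

(* p ∈ Lip_1([0,1], R)  (only the values on [0,1] matter) *)
Definition Lip1_unit (R : realType) (p : R -> R) : Prop :=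
  forall s t, 0 <= s <= 1 -> 0 <= t <= 1 -> `|p s - p t| <= `|s - t|.

Definition dense_Lip1_unit (R : realType) (P : (R -> R) -> Prop) : Prop :=
  (forall p, P p -> Lip1_unit p) /\
  (forall q, Lip1_unit q -> forall e : R, 0 < e ->
     exists p, P p /\ forall t, 0 <= t <= 1 -> `|p t - q t| <= e).

Definition segment_param (R : realType) (d : nat) (gamma : R -> 'I_d -> R) : Prop :=
  (exists (a v : 'I_d -> R), enorm v = 1 /\ forall t i, gamma t i = a i + t * v i) /\
  (forall t, 0 <= t <= 1 -> in_open_cube (gamma t)).

(* The j-th coordinate of g is p clipped to the band [f_j - e, f_j + e], which keeps g
   uniformly close to f; the work is to keep g 1-Lipschitz. For l = 1 take p close to
   f_1 o gamma and feed it the (clamped) coordinate of x along the segment, an orthogonal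
   projection. For l > 1 the other coordinates f_i must stay Lipschitz jointly with g_j:
   write sigma(x) for the coordinate of x along the segment clamped to [-eta, eta], slide
   x back by sigma(x) along the segment (then clamp it into the cube), and use f o slide
   for the other coordinates and p(t0 + sigma) for g_j, with p close to the constant
   f_j(gamma t0). Near t0 the slide collapses the segment to gamma t0, so there
   g_j o gamma = p. *)

From mathcomp Require Import all_boot all_order all_algebra.
From mathcomp Require Import reals ring lra.
From Stdlib Require Import FunctionalExtensionality.
Set Implicit Arguments. Unset Strict Implicit. Unset Printing Implicit Defensive.
Import Order.TTheory GRing.Theory Num.Theory.
Local Open Scope ring_scope.

Lemma ler_norm_sqr (R : realDomainType) (x y : R) : (`|x| <= `|y|) = (x ^+ 2 <= y ^+ 2).
Proof. by rewrite -ler_sqr ?nnegrE ?normr_ge0 // !real_normK ?num_real. Qed.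

Section Clamp.
Variable R : realFieldType.
Implicit Types lo hi c e x y : R.

Definition clamp lo hi y : R := if y < lo then lo else if hi < y then hi else y.

Lemma clamp_id lo hi y : lo <= y <= hi -> clamp lo hi y = y.
Proof. by rewrite /clamp => /andP[? ?]; case: (ltrP y lo) => ?; case: (ltrP hi y) => ?; lra. Qed.

Lemma clamp_range lo hi y : lo <= hi -> lo <= clamp lo hi y <= hi.
Proof. by rewrite /clamp => ?; case: (ltrP y lo) => ?; case: (ltrP hi y) => ?; lra. Qed.

Lemma clamp_sqrB_le_mul lo hi y y' : lo <= hi ->
  (clamp lo hi y - clamp lo hi y') ^+ 2 <= (clamp lo hi y - clamp lo hi y') * (y - y').
Proof.
rewrite /clamp => ?; case: (ltrP y lo) => ?; case: (ltrP hi y) => ?;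
  case: (ltrP y' lo) => ?; case: (ltrP hi y') => ?; nra.
Qed.

Lemma clamp_sqrB_le lo hi y y' : lo <= hi ->
  (clamp lo hi y - clamp lo hi y') ^+ 2 <= (y - y') ^+ 2.
Proof.
move=> /(clamp_sqrB_le_mul y y'); set D := _ - _ => hD.
by have := sqr_ge0 (D - (y - y')); nra.
Qed.

Lemma clamp_sqr_dist lo hi x y : lo <= x <= hi -> (clamp lo hi y - x) ^+ 2 <= (y - x) ^+ 2.
Proof. by rewrite /clamp => /andP[? ?]; case: (ltrP y lo) => ?; case: (ltrP hi y) => ?; nra. Qed.

Lemma clamp_window_dist c e y : 0 <= e -> `|clamp (c - e) (c + e) y - c| <= e.
Proof.
move=> e0; have /andP[? ?] : c - e <= clamp (c - e) (c + e) y <= c + e.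
  by apply: clamp_range; lra.
by rewrite ler_norml; apply/andP; split; lra.
Qed.

Lemma clamp_window_id c e y : `|y - c| <= e -> clamp (c - e) (c + e) y = y.
Proof. by rewrite ler_norml => /andP[? ?]; apply: clamp_id; apply/andP; split; lra. Qed.

Lemma clamp_window_sqrB c c' e y y' : 0 <= e ->
  (clamp (c - e) (c + e) y - clamp (c' - e) (c' + e) y') ^+ 2
    <= Num.max ((c - c') ^+ 2) ((y - y') ^+ 2).
Proof.
move=> e0; rewrite le_max; set D := _ - _.
have : (c - c' <= D <= y - y') || (y - y' <= D <= c - c').
  rewrite /D /clamp; case: (ltrP y (c - e)) => ?; case: (ltrP (c + e) y) => ?;
    case: (ltrP y' (c' - e)) => ?; case: (ltrP (c' + e) y') => ?; apply/orP; lra.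
case/orP=> /andP[? ?]; have [?|?] := lerP 0 D;
  first [by apply/orP; left; nra | by apply/orP; right; nra].
Qed.
End Clamp.

Section SquaredNorm.
Variable R : realType.

Definition sqnorm n (x : 'I_n -> R) : R := \sum_i x i ^+ 2.
Definition dot n (x y : 'I_n -> R) : R := \sum_i x i * y i.

Lemma sqnorm_ge0 n (x : 'I_n -> R) : 0 <= sqnorm x.
Proof. by apply: sumr_ge0 => i _; exact: sqr_ge0. Qed.

Lemma enorm_vsubxx n (x : 'I_n -> R) : enorm (vsub x x) = 0.
Proof. by rewrite /enorm big1 ?sqrtr0 // => i _; rewrite /vsub subrr expr0n. Qed.

Lemma ler_enorm n m (x : 'I_n -> R) (y : 'I_m -> R) :
  (enorm x <= enorm y) = (sqnorm x <= sqnorm y).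
Proof. exact/ler_sqrt/sqnorm_ge0. Qed.

Lemma enorm_le n (x : 'I_n -> R) c : 0 <= c -> (enorm x <= c) = (sqnorm x <= c ^+ 2).
Proof. by move=> c0; rewrite -[c in LHS]ger0_norm // -sqrtr_sqr ler_sqrt ?sqr_ge0. Qed.

Lemma sqnorm_bigD1 n (x : 'I_n -> R) j :
  sqnorm x = \sum_(i | i != j) x i ^+ 2 + x j ^+ 2.
Proof. by rewrite /sqnorm (bigD1 j) //= addrC. Qed.

Lemma Lip1_cubeP d l (f : ('I_d -> R) -> 'I_l -> R) :
  Lip1_cube f <-> forall x y, in_cube x -> in_cube y ->
    sqnorm (vsub (f x) (f y)) <= sqnorm (vsub x y).
Proof.
by split=> hf x y hx hy; [rewrite -ler_enorm -[X in _ <= X]mul1r | rewrite mul1r ler_enorm];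
  apply: hf.
Qed.

Section UnitVector.
Variables (n : nat) (v : 'I_n -> R).
Hypothesis v_unit : sqnorm v = 1.

Lemma sqnormZ c : sqnorm (fun i => c * v i) = c ^+ 2.
Proof.
rewrite /sqnorm (eq_bigr (fun i => c ^+ 2 * v i ^+ 2)) => [|i _]; last by rewrite exprMn.
by rewrite -mulr_sumr -/(sqnorm v) v_unit mulr1.
Qed.

Lemma sqnorm_subZ (x : 'I_n -> R) c :
  sqnorm (fun i => x i - c * v i) = sqnorm x - 2 * c * dot x v + c ^+ 2.
Proof.
rewrite -(sqnormZ c) /sqnorm /dot mulr_sumr -sumrB -big_split /=.
by apply: eq_bigr => i _; ring.
Qed.

Lemma sqr_dot_le (x : 'I_n -> R) : dot x v ^+ 2 <= sqnorm x.
Proof.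
have := sqnorm_ge0 (fun i => x i - dot x v * v i).
by rewrite sqnorm_subZ; lra.
Qed.
End UnitVector.

Lemma enorm_update_le n (u w z : 'I_n -> R) (j : 'I_n) (e : R) : 0 <= e ->
  (forall i, i != j -> u i = w i) -> `|u j - w j| <= e ->
  enorm (vsub u z) <= enorm (vsub w z) + e.
Proof.
move=> e0 uw; rewrite ler_norml => /andP[b1 b2].
set D := enorm (vsub w z); have D0 : 0 <= D := sqrtr_ge0 _.
have : D ^+ 2 = sqnorm (vsub w z) by rewrite sqr_sqrtr ?sqnorm_ge0.
rewrite enorm_le ?addr_ge0 // !(sqnorm_bigD1 _ j) /vsub => hD.
rewrite (eq_bigr (fun i => (w i - z i) ^+ 2)) => [|i /uw -> //].
set S := \sum_(i | _) _ in hD *; have S0 : 0 <= S by apply: sumr_ge0 => i _; apply: sqr_ge0.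
have -> : u j - z j = (w j - z j) + (u j - w j) by ring.
set a := w j - z j in hD *; set b := u j - w j in b1 b2 *.
have : `|a| <= D by rewrite -(ger0_norm D0) ler_norm_sqr; lra.
by rewrite ler_norml => /andP[? ?]; nra.
Qed.
End SquaredNorm.

Section Graft.
Variables (R : realType) (d l : nat) (F : ('I_d -> R) -> 'I_l -> R) (j : 'I_l).
Variables (beta : ('I_d -> R) -> R) (e : R).
Hypothesis e_ge0 : 0 <= e.

Definition graft x : 'I_l -> R :=
  fun i => if i == j then clamp (F x j - e) (F x j + e) (beta x) else F x i.

Lemma graft_lip : Lip1_cube F ->
  (forall x y, in_cube x -> in_cube y ->
     \sum_(i | i != j) (F x i - F y i) ^+ 2 + (beta x - beta y) ^+ 2
       <= sqnorm (vsub x y)) ->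
  Lip1_cube graft.
Proof.
move=> /Lip1_cubeP F_lip beta_lip; apply/Lip1_cubeP => x y hx hy.
rewrite (sqnorm_bigD1 _ j) /vsub (eq_bigr (fun i => (F x i - F y i) ^+ 2)) => [|i /negbTE ij];
  last by rewrite /graft ij.
rewrite /graft eqxx.
have := clamp_window_sqrB (F x j) (F y j) (beta x) (beta y) e_ge0.
rewrite le_max => /orP[] h.
- by apply: le_trans (F_lip x y hx hy); rewrite (sqnorm_bigD1 _ j) lerD2l.
- by apply: le_trans (beta_lip x y hx hy); rewrite lerD2l.
Qed.

Lemma graft_close x z : enorm (vsub (graft x) z) <= enorm (vsub (F x) z) + e.
Proof.
apply: (enorm_update_le (j := j) z) => // [i /negbTE ij|]; first by rewrite /graft ij.
by rewrite /graft /= eqxx; apply: clamp_window_dist.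
Qed.

Lemma graft_eq x : `|beta x - F x j| <= e -> graft x j = beta x.
Proof. by rewrite /graft /= eqxx; apply: clamp_window_id. Qed.
End Graft.

Section Segment.
Variables (R : realType) (d : nat) (x0 v : 'I_d -> R).
Hypothesis v_unit : sqnorm v = 1.

Definition line t : 'I_d -> R := fun i => x0 i + t * v i.

Definition coord x : R := dot (vsub x x0) v.

Lemma coordB x y : coord x - coord y = dot (vsub x y) v.
Proof. by rewrite /coord /dot -sumrB; apply: eq_bigr => i _; rewrite /vsub; ring. Qed.

Lemma sqr_coordB_le x y : (coord x - coord y) ^+ 2 <= sqnorm (vsub x y).
Proof. by rewrite coordB; apply: sqr_dot_le. Qed.

Lemma coord_line t : coord (line t) = t.
Proof.
rewrite /coord /dot (eq_bigr (fun i => t * v i ^+ 2)) => [|i _]; last by rewrite /vsub /line; ring.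
by rewrite -mulr_sumr -/(sqnorm v) v_unit mulr1.
Qed.

Lemma sqnorm_lineB s t : sqnorm (vsub (line s) (line t)) = (s - t) ^+ 2.
Proof.
rewrite -(sqnormZ v_unit) /sqnorm; apply: eq_bigr => i _.
by rewrite /vsub /line; congr (_ ^+ 2); ring.
Qed.

Lemma Lip1_unit_line_comp l (f : ('I_d -> R) -> 'I_l -> R) (j : 'I_l) t0 :
  Lip1_cube f -> (forall t, 0 <= t <= 1 -> in_cube (line (t - t0))) ->
  Lip1_unit (fun t => f (line (t - t0)) j).
Proof.
move=> /Lip1_cubeP f_lip line_cube s t hs ht; rewrite ler_norm_sqr.
apply: le_trans (_ : sqnorm (vsub (f (line (s - t0))) (f (line (t - t0)))) <= _).
  by rewrite (sqnorm_bigD1 _ j) lerDr; apply: sumr_ge0 => i _; apply: sqr_ge0.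
apply: le_trans (f_lip _ _ (line_cube _ hs) (line_cube _ ht)) _.
by rewrite sqnorm_lineB; have -> : s - t0 - (t - t0) = s - t by ring.
Qed.

Variable eta : R.
Hypothesis eta_ge0 : 0 <= eta.

Definition shift x := clamp (- eta) eta (coord x).

Definition slide x : 'I_d -> R := fun i => clamp 0 1 (x i - shift x * v i).

Lemma shift_range x : - eta <= shift x <= eta.
Proof. by apply: clamp_range; move: eta_ge0; lra. Qed.

Lemma slide_cube x : in_cube (slide x).
Proof. by move=> i; apply: clamp_range; apply: ler01. Qed.

(* s |-> sigma(s) and s |-> s - sigma(s) are both monotone and 1-Lipschitz. *)
Lemma sqnorm_slideB_le x y :
  sqnorm (vsub (slide x) (slide y)) + (shift x - shift y) ^+ 2 <= sqnorm (vsub x y).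
Proof.
have slideB : sqnorm (vsub (slide x) (slide y))
    <= sqnorm (fun i => vsub x y i - (shift x - shift y) * v i).
  apply: ler_sum => i _; rewrite /vsub /slide.
  have := clamp_sqrB_le (x i - shift x * v i) (y i - shift y * v i) ler01.
  by congr (_ <= _); congr (_ ^+ 2); ring.
have eta_range : - eta <= eta by move: eta_ge0; lra.
have shiftB := clamp_sqrB_le_mul (coord x) (coord y) eta_range.
move: slideB shiftB; rewrite sqnorm_subZ // -coordB -/(shift x) -/(shift y); nra.
Qed.

Lemma sqnorm_slide_sub_le x : in_cube x -> sqnorm (vsub (slide x) x) <= eta ^+ 2.
Proof.
move=> x_cube; apply: le_trans (_ : sqnorm (fun i => shift x * v i) <= _).
  apply: ler_sum => i _; rewrite /vsub /slide.
  have := clamp_sqr_dist (x i - shift x * v i) (x_cube i).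
  by congr (_ <= _); ring.
rewrite sqnormZ // -ler_norm_sqr (ger0_norm eta_ge0).
by rewrite ler_norml shift_range.
Qed.

Lemma shift_line t : `|t| <= eta -> shift (line t) = t.
Proof. by rewrite /shift coord_line ler_norml => ?; apply: clamp_id. Qed.

Lemma slide_line t : in_cube x0 -> `|t| <= eta -> slide (line t) = x0.
Proof.
move=> x0_cube /shift_line shift_t; apply: functional_extensionality => i.
rewrite /slide shift_t /line; have -> : x0 i + t * v i - t * v i = x0 i by ring.
exact/clamp_id/x0_cube.
Qed.
End Segment.

Lemma segment_param_line (R : realType) d (gamma : R -> 'I_d -> R) t0 :
  segment_param gamma ->
  exists2 v, sqnorm v = 1 & forall t, gamma t = line (gamma t0) v (t - t0).
Proof.
move=> [[? [v [v_norm gammaE]]] _]; exists v.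
  by rewrite -(expr1n _ 2) -v_norm sqr_sqrtr ?sqnorm_ge0.
by move=> t; apply: functional_extensionality => i; rewrite /line !gammaE; ring.
Qed.

Lemma segment_param_cube (R : realType) d (gamma : R -> 'I_d -> R) t :
  segment_param gamma -> 0 <= t <= 1 -> in_cube (gamma t).
Proof. by move=> [_ gamma_in] /gamma_in + i => /(_ i) /andP[? ?]; rewrite !ltW. Qed.

Lemma local_radius (R : realFieldType) (t0 e : R) : 0 < t0 < 1 -> 0 < e ->
  exists eta, [/\ 0 < eta, eta <= e, eta <= t0 & t0 + eta <= 1].
Proof.
move=> /andP[t0_gt0 t0_lt1] e_gt0; exists (Num.min e (Num.min t0 (1 - t0))).
by rewrite !lt_min e_gt0 t0_gt0 subr_gt0 t0_lt1 -lerBrDl !ge_min !lexx !orbT.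
Qed.

Section LocalGraft.
Variables (R : realType) (d l : nat) (f : ('I_d -> R) -> 'I_l -> R) (j : 'I_l).
Variables (x0 v : 'I_d -> R) (t0 e eta : R) (p : R -> R).
Hypotheses (f_lip : Lip1_cube f) (v_unit : sqnorm v = 1) (x0_cube : in_cube x0).
Hypotheses (e_ge0 : 0 <= e) (eta_ge0 : 0 <= eta).
Hypotheses (eta_le_t0 : eta <= t0) (eta_le_1t0 : t0 + eta <= 1).
Hypotheses (p_lip : Lip1_unit p) (p_near : forall t, 0 <= t <= 1 -> `|p t - f x0 j| <= e).

Definition local_graft :=
  graft (fun x => f (slide x0 v eta x)) j (fun x => p (t0 + shift x0 v eta x)) e.

Lemma local_graft_lip : Lip1_cube local_graft.
Proof.
have slide_lip := sqnorm_slideB_le x0 v_unit eta_ge0.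
have f_slide_lip x y : sqnorm (vsub (f (slide x0 v eta x)) (f (slide x0 v eta y)))
    <= sqnorm (vsub (slide x0 v eta x) (slide x0 v eta y)).
  by move/Lip1_cubeP: f_lip; apply; apply: slide_cube.
apply: graft_lip => // [|x y _ _].
  apply/Lip1_cubeP => x y _ _; apply: le_trans (f_slide_lip x y) _.
  by apply: le_trans (slide_lip x y); rewrite lerDl sqr_ge0.
apply: le_trans (slide_lip x y); apply: lerD.
  apply: le_trans (f_slide_lip x y).
  by rewrite (sqnorm_bigD1 _ j) lerDl sqr_ge0.
have in_unit z : 0 <= t0 + shift x0 v eta z <= 1.
  move: eta_le_t0 eta_le_1t0 (shift_range x0 v eta_ge0 z) => ? ? /andP[? ?].
  by apply/andP; split; lra.
have := p_lip (in_unit x) (in_unit y).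
by rewrite -ler_norm_sqr opprD addrACA subrr add0r.
Qed.

Lemma local_graft_close x : in_cube x -> enorm (vsub (local_graft x) (f x)) <= eta + e.
Proof.
move=> x_cube; apply: le_trans (graft_close _ _ _ e_ge0 _ _) _; rewrite lerD2r.
apply: le_trans (f_lip (slide_cube _ _ _ _) x_cube) _.
by rewrite mul1r enorm_le //; apply: sqnorm_slide_sub_le.
Qed.

Lemma local_graft_line t : `|t - t0| <= eta -> 0 <= t <= 1 ->
  local_graft (line x0 v (t - t0)) j = p t.
Proof.
move=> t_near t_unit.
have beta_t : p (t0 + shift x0 v eta (line x0 v (t - t0))) = p t.
  by rewrite (shift_line x0 v_unit) // addrC subrK.
by rewrite /local_graft graft_eq beta_t // slide_line //; apply: p_near.
Qed.
End LocalGraft.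

Section GlobalGraft.
Variables (R : realType) (d : nat) (f : ('I_d -> R) -> 'I_1 -> R) (j : 'I_1).
Variables (x0 v : 'I_d -> R) (t0 e : R) (p : R -> R).
Hypotheses (f_lip : Lip1_cube f) (v_unit : sqnorm v = 1).
Hypotheses (e_ge0 : 0 <= e) (p_lip : Lip1_unit p).
Hypothesis p_near : forall t, 0 <= t <= 1 -> `|p t - f (line x0 v (t - t0)) j| <= e.

Definition global_graft := graft f j (fun x => p (clamp 0 1 (t0 + coord x0 v x))) e.

Lemma global_graft_lip : Lip1_cube global_graft.
Proof.
apply: graft_lip => // x y _ _.
rewrite big_pred0 => [|i]; last by rewrite [i]ord1 [j]ord1 eqxx.
rewrite add0r; apply: le_trans (sqr_coordB_le x0 v_unit x y).
apply: le_trans (_ : (clamp 0 1 (t0 + coord x0 v x) - clamp 0 1 (t0 + coord x0 v y)) ^+ 2 <= _).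
  by rewrite -ler_norm_sqr; apply: p_lip; apply: clamp_range.
have := clamp_sqrB_le (t0 + coord x0 v x) (t0 + coord x0 v y) ler01.
by rewrite opprD addrACA subrr add0r.
Qed.

Lemma global_graft_close x : enorm (vsub (global_graft x) (f x)) <= e.
Proof. by apply: le_trans (graft_close _ _ _ e_ge0 _ _) _; rewrite enorm_vsubxx add0r. Qed.

Lemma global_graft_line t : 0 <= t <= 1 -> global_graft (line x0 v (t - t0)) j = p t.
Proof.
move=> t_unit.
have beta_t : p (clamp 0 1 (t0 + coord x0 v (line x0 v (t - t0)))) = p t.
  by rewrite coord_line // addrC subrK clamp_id.
by rewrite /global_graft graft_eq beta_t //; apply: p_near.
Qed.
End GlobalGraft.

Theorem lemma6p2 (R : realType) (d l : nat) (gamma : R -> 'I_d -> R)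
  (P : (R -> R) -> Prop) (t0 : R) (f : ('I_d -> R) -> ('I_l -> R))
  (eps : R) (j : 'I_l) :
  segment_param gamma ->
  dense_Lip1_unit P ->
  0 < t0 < 1 ->
  Lip1_cube f ->
  Lip_lt1_cube f ->
  0 < eps < 1 ->
  exists (p : R -> R) (eta : R) (g : ('I_d -> R) -> ('I_l -> R)),
    [/\ P p /\ 0 < eta, Lip1_cube g,
        (forall x, in_cube x -> enorm (vsub (g x) (f x)) <= eps),
        (forall t, t0 - eta < t < t0 + eta -> 0 <= t <= 1 -> g (gamma t) j = p t)
      & (l = 1%N -> forall t, 0 <= t <= 1 -> g (gamma t) j = p t)].
Proof.
move=> gamma_seg [P_lip P_dense] t0_01 f_lip _ /andP[eps_gt0 _].
have [v v_unit gamma_line] := segment_param_line t0 gamma_seg.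
have gamma_cube t := @segment_param_cube _ _ _ t gamma_seg.
pose x0 := gamma t0; have x0_cube : in_cube x0.
  by case/andP: t0_01 => ? ?; apply: gamma_cube; rewrite !ltW.
have [l1 | l_ne1] := eqVneq l 1%N.
- subst l; have line_cube t : 0 <= t <= 1 -> in_cube (line x0 v (t - t0)).
    by rewrite -gamma_line; apply: gamma_cube.
  have [p [Pp p_near]] := P_dense _ (Lip1_unit_line_comp v_unit j f_lip line_cube) _ eps_gt0.
  exists p, 1, (global_graft f j x0 v t0 eps p); split; rewrite ?ltr01 //.
  + exact: global_graft_lip (ltW eps_gt0) (P_lip _ Pp).
  + by move=> x _; apply/global_graft_close/ltW.
  + by move=> t _ t_unit; rewrite gamma_line (global_graft_line v_unit p_near).
  + by move=> _ t t_unit; rewrite gamma_line (global_graft_line v_unit p_near).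
- pose e := eps / 2; have e_gt0 : 0 < e by rewrite divr_gt0.
  have [eta [eta_gt0 eta_le_e eta_le_t0 eta_le_1t0]] := local_radius t0_01 e_gt0.
  have const_lip : Lip1_unit (fun=> f x0 j) by move=> s t _ _; rewrite subrr normr0.
  have [p [Pp p_near]] := P_dense _ const_lip _ e_gt0.
  exists p, eta, (local_graft f j x0 v t0 e eta p); split => //.
  + by apply: local_graft_lip => //; [exact: ltW | exact: ltW | exact: P_lip].
  + move=> x x_cube.
    have := local_graft_close j x0 t0 p f_lip v_unit (ltW e_gt0) (ltW eta_gt0) x_cube.
    by have := splitr eps; rewrite -/e; lra.
  + move=> t t_near t_unit; rewrite gamma_line (local_graft_line v_unit x0_cube p_near) //.
    by rewrite ler_norml; apply/andP; split; lra.
  + by move=> /eqP; rewrite (negbTE l_ne1).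
Qed.
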